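(* For every integer $k>0$, the class of Helly-$B_k$-EPG graphs is a proper subclass of the class of $B_k$-EPG graphs.
   Context: A grid is the set of integer points of the plane; a grid edge joins two grid points at distance $1$. A path in the grid is a sequence of distinct grid edges in which consecutive edges share exactly one grid point and non-consecutive edges share none; a bend is a pair of consecutive edges with different directions (horizontal/vertical). An EPG representation of a graph $G$ is a family $(P_v)_{v\in V(G)}$ of grid paths such that distinct $u,v$ are adjacent iff $P_u,P_v$ share a grid edge; it is $B_k$-EPG if every path has at most $k$ bends, and Helly if every subfamily of pairwise edge-intersecting paths has a grid edge common to all its members. $B_k$-EPG (resp. Helly-$B_k$-EPG) graphs are those admitting a $B_k$-EPG (resp. Helly $B_k$-EPG) representation. *)

From mathcomp Require Import all_boot all_order all_algebra.
Set Implicit Arguments. Unset Strict Implicit. Unset Printing Implicit Defensive.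
Import Order.TTheory GRing.Theory Num.Theory.

Definition gpoint := (int * int)%type.

(* A grid edge joins two grid points at distance 1.  Every grid edge is
   uniquely determined by its lower-left endpoint (x,y) and its direction:
   (x, y, true)  is the horizontal edge {(x,y), (x+1,y)},
   (x, y, false) is the vertical edge   {(x,y), (x,y+1)}. *)
Definition gedge := (int * int * bool)%type.

Definition horizontal (e : gedge) : bool := e.2.

Definition gends (e : gedge) : seq gpoint :=
  let: (x, y, h) := e in
  [:: (x, y); if h then ((x + 1)%R, y) else (x, (y + 1)%R)].

Definition nshared (e f : gedge) : nat := count (fun p => p \in gends f) (gends e).

Definition grid_path (P : seq gedge) : Prop :=
  [/\ 0 < size P, uniq P &
      forall i j, i < j -> j < size P ->
        nshared (nth (0%R, 0%R, true) P i) (nth (0%R, 0%R, true) P j)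
        = (if j == i.+1 then 1 else 0)].

Definition nbends (P : seq gedge) : nat :=
  \sum_(i < (size P).-1)
     (horizontal (nth (0%R, 0%R, true) P i) != horizontal (nth (0%R, 0%R, true) P i.+1)).

Definition simple_graph (T : finType) (g : rel T) : Prop :=
  symmetric g /\ irreflexive g.

Definition edge_intersect (P Q : seq gedge) : Prop := exists e, e \in P /\ e \in Q.

Definition Bk_EPG_rep (k : nat) (T : finType) (g : rel T) (P : T -> seq gedge) : Prop :=
  [/\ forall v, grid_path (P v),
      forall v, nbends (P v) <= k &
      forall u v, u != v -> (g u v <-> edge_intersect (P u) (P v))].

Definition Helly_family (T : finType) (P : T -> seq gedge) : Prop :=
  forall S : {set T},
    (forall u v, u \in S -> v \in S -> edge_intersect (P u) (P v)) ->
    exists e, forall v, v \in S -> e \in P v.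

Definition Bk_EPG (k : nat) (T : finType) (g : rel T) : Prop :=
  exists P, Bk_EPG_rep k g P.

Definition Helly_Bk_EPG (k : nat) (T : finType) (g : rel T) : Prop :=
  exists P, Bk_EPG_rep k g P /\ Helly_family P.

From mathcomp Require Import all_boot all_order all_algebra.
From mathcomp Require Import zify.

(* For k = 1 the 3-sun separates the
   classes: in a Helly representation the paths of its central triangle share an edge, and each
   ear gives two of them a common edge avoiding the third.  Paths with at most one bend through
   a common edge are, up to swapping the axes, hooks on one row, and two of the three private
   edges would lie on the same side of that row, which is impossible.
   For k >= 2 take a clique on 2a vertices with an ear on every pair {i, a + j}; it has a
   representation with at most two bends.  In a Helly representation each ear triangle has an
   edge whose trace on the clique paths is exactly {i, a + j}, giving a^2 distinct traces.  Along
   a grid line the trace changes only at a boundary event of some path, that is at an end or a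
   bend, so m paths with at most k bends have at most m (2 + 2k) nonempty traces; a = 4k + 5
   makes a^2 exceed 2a (2 + 2k). *)

Set Implicit Arguments. Unset Strict Implicit. Unset Printing Implicit Defensive.
Import Order.TTheory GRing.Theory Num.Theory.

Definition edge0 : gedge := (0%R, 0%R, true).
Local Notation edge_at P i := (nth edge0 P i).

Lemma nshared_gt0 e f : (0 < nshared e f) = has (mem (gends f)) (gends e).
Proof. by rewrite /nshared has_count. Qed.

Lemma gends_eq_of_neq e x y z : x \in gends e -> y \in gends e -> z \in gends e ->
  x != z -> y != z -> x = y.
Proof.
case: e => [[a b] h]; rewrite !inE.
by do 3 case/orP=> /eqP->; rewrite ?eqxx.
Qed.

Section GridPath.
Variable P : seq gedge.
Hypothesis gpP : grid_path P.

Lemma grid_path_succ_shared i : i.+1 < size P ->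
  exists2 p, p \in gends (edge_at P i) & p \in gends (edge_at P i.+1).
Proof.
case: gpP => _ _ sh iP; have := sh i i.+1 (ltnSn i) iP.
by rewrite eqxx => /(congr1 (leq 1)); rewrite nshared_gt0 => /hasP.
Qed.

Lemma grid_path_shared_succ i j q : i < j -> j < size P ->
  q \in gends (edge_at P i) -> q \in gends (edge_at P j) -> j = i.+1.
Proof.
case: gpP => _ _ sh ij jP qi qj; have := sh i j ij jP.
have: 0 < nshared (edge_at P i) (edge_at P j) by rewrite nshared_gt0; apply/hasP; exists q.
by case: eqP => [//|_] /[swap] ->.
Qed.

Lemma grid_path_shared_adj i j q : i != j -> i < size P -> j < size P ->
  q \in gends (edge_at P i) -> q \in gends (edge_at P j) -> j = i.+1 \/ i = j.+1.
Proof.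
case: (ltngtP i j) => // ij _ iP jP qi qj.
  by left; apply: grid_path_shared_succ qi qj.
by right; apply: grid_path_shared_succ qj qi.
Qed.

Lemma grid_path_no_triple_point q e1 e2 e3 :
  e1 \in P -> e2 \in P -> e3 \in P -> e1 != e2 -> e1 != e3 -> e2 != e3 ->
  q \in gends e1 -> q \in gends e2 -> q \in gends e3 -> False.
Proof.
have [_ uP _] := gpP.
move=> e1P e2P e3P n12 n13 n23 q1 q2 q3.
have iP x : x \in P -> index x P < size P by rewrite index_mem.
have qi x : x \in P -> q \in gends x -> q \in gends (edge_at P (index x P)).
  by move=> xP; rewrite nth_index.
have ni x y : x \in P -> y \in P -> x != y -> index x P != index y P.
  by move=> xP yP; apply: contra => /eqP/(congr1 (nth edge0 P)); rewrite !nth_index // => ->.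
have := grid_path_shared_adj (ni _ _ e1P e2P n12) (iP _ e1P) (iP _ e2P) (qi _ e1P q1) (qi _ e2P q2).
have := grid_path_shared_adj (ni _ _ e1P e3P n13) (iP _ e1P) (iP _ e3P) (qi _ e1P q1) (qi _ e3P q3).
have := grid_path_shared_adj (ni _ _ e2P e3P n23) (iP _ e2P) (iP _ e3P) (qi _ e2P q2) (qi _ e3P q3).
clear; lia.
Qed.

Lemma grid_path_interior i q : 0 < i -> i.+1 < size P -> q \in gends (edge_at P i) ->
  (q \in gends (edge_at P i.-1)) || (q \in gends (edge_at P i.+1)).
Proof.
move=> i0 iP qi; apply/negPn/negP; rewrite negb_or => /andP [qp qs].
have [p1 p1p p1i] := @grid_path_succ_shared i.-1 (ltac:(lia)).
have [p2 p2i p2s] := grid_path_succ_shared iP.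
rewrite prednK // in p1i.
have p12 : p1 = p2.
  by apply: (gends_eq_of_neq p1i p2i qi); [apply: contraNneq qp => <- | apply: contraNneq qs => <-].
have := @grid_path_shared_succ i.-1 i.+1 p1 (ltac:(lia)) iP p1p.
by rewrite p12 => /(_ p2s); lia.
Qed.

End GridPath.

Definition edge_out (q : gpoint) (o : bool) : gedge := (q.1, q.2, o).
Definition edge_in (q : gpoint) (o : bool) : gedge :=
  if o then ((q.1 - 1)%R, q.2, true) else (q.1, (q.2 - 1)%R, false).

Definition boundary (P : seq gedge) (q : gpoint) (o : bool) : bool :=
  (edge_in q o \in P) != (edge_out q o \in P).

Lemma edges_at_point g q : q \in gends g ->
  g = edge_in q (horizontal g) \/ g = edge_out q (horizontal g).
Proof.
case: g q => [[x y] h] [qx qy].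
by case: h; rewrite !inE => /orP [] /eqP [-> ->]; [right | left | right | left];
  rewrite /edge_in /edge_out //=; congr (_, _, _); lia.
Qed.

Lemma horizontal_edge_in q o : horizontal (edge_in q o) = o.
Proof. by case: o. Qed.

Lemma gends_edge_in q o : q \in gends (edge_in q o).
Proof.
by case: q o => x y [|]; rewrite /= !inE subrK eqxx orbT.
Qed.

Lemma gends_edge_out q o : q \in gends (edge_out q o).
Proof. by case: q o => x y [|]; rewrite !inE eqxx. Qed.

Lemma boundary_exists P q o : boundary P q o ->
  exists g, [/\ g \in P, horizontal g = o & q \in gends g].
Proof.
rewrite /boundary; case: (boolP (edge_in q o \in P)) => [inP _|_ /negbNE outP].
  by exists (edge_in q o); rewrite horizontal_edge_in gends_edge_in.
by exists (edge_out q o); rewrite gends_edge_out.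
Qed.

Lemma boundary_unique P q o : boundary P q o ->
  {in P &, forall g g', horizontal g = o -> horizontal g' = o ->
     q \in gends g -> q \in gends g' -> g = g'}.
Proof.
move=> bq g g' gP g'P og og' /edges_at_point qg /edges_at_point qg'.
rewrite og in qg; rewrite og' in qg'.
move: bq; rewrite /boundary.
by case: qg qg' => Eg [] Eg'; rewrite -?Eg -?Eg' ?gP ?g'P // Eg Eg'.
Qed.

Definition bend (P : seq gedge) i : bool :=
  horizontal (edge_at P i) != horizontal (edge_at P i.+1).

Definition bend_indices (P : seq gedge) : seq nat := [seq i <- iota 0 (size P).-1 | bend P i].

Definition bend_point (P : seq gedge) i : gpoint :=
  head (0%R, 0%R) [seq p <- gends (edge_at P i) | p \in gends (edge_at P i.+1)].

(* A one-edge path has both its endpoints free; they are attributed to its head. *)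
Definition head_ends (P : seq gedge) : seq gpoint :=
  if size P <= 1 then gends (edge_at P 0)
  else [seq p <- gends (edge_at P 0) | p \notin gends (edge_at P 1)].

Definition last_ends (P : seq gedge) : seq gpoint :=
  if size P <= 1 then [::]
  else [seq p <- gends (edge_at P (size P).-1) | p \notin gends (edge_at P (size P).-2)].

Definition end_events (P : seq gedge) : seq (gpoint * bool) :=
  [seq (p, horizontal (edge_at P 0)) | p <- head_ends P] ++
  [seq (p, horizontal (edge_at P (size P).-1)) | p <- last_ends P].

Definition bend_events (P : seq gedge) : seq (gpoint * bool) :=
  flatten [seq [:: (bend_point P i, true); (bend_point P i, false)] | i <- bend_indices P].

Definition boundary_candidates (P : seq gedge) : seq (gpoint * bool) :=
  end_events P ++ bend_events P.

Lemma nbendsE P : nbends P = size (bend_indices P).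
Proof.
rewrite /nbends /bend_indices size_filter -(big_mkord xpredT (fun i => bend P i : nat)).
rewrite /index_iota subn0 -sum1_count [RHS]big_mkcond.
by apply: eq_bigr => i _; case: bend.
Qed.

Lemma bend_pointE P i q : grid_path P -> i.+1 < size P ->
  q \in gends (edge_at P i) -> q \in gends (edge_at P i.+1) -> bend_point P i = q.
Proof.
case=> _ _ sh iP qi qs; have := sh i i.+1 (ltnSn i) iP; rewrite eqxx /nshared -size_filter.
have: q \in [seq p <- gends (edge_at P i) | p \in gends (edge_at P i.+1)] by rewrite mem_filter qs.
by rewrite /bend_point; case: [seq _ <- _ | _] => [|x [|]] //= /[1!inE] /eqP.
Qed.

Lemma bend_event_at P i q o : grid_path P -> i.+1 < size P ->
  q \in gends (edge_at P i) -> q \in gends (edge_at P i.+1) ->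
  (horizontal (edge_at P i) == o) || (horizontal (edge_at P i.+1) == o) ->
  {in P &, forall g g', horizontal g = o -> horizontal g' = o ->
     q \in gends g -> q \in gends g' -> g = g'} ->
  (q, o) \in bend_events P.
Proof.
move=> gpP iP qi qs dir uniq_o.
have [_ uP _] := gpP.
have bi : bend P i.
  apply: contraT => /negPn/eqP same.
  have [o_i o_s] : horizontal (edge_at P i) = o /\ horizontal (edge_at P i.+1) = o.
    by case/orP: dir => /eqP <-; split; rewrite ?same.
  have := uniq_o _ _ (mem_nth edge0 (ltnW iP)) (mem_nth edge0 iP) o_i o_s qi qs.
  by move/eqP; rewrite nth_uniq // 1?ltnW // (ltn_eqF (ltnSn i)).
apply/flattenP; exists [:: (bend_point P i, true); (bend_point P i, false)].
  by apply/mapP; exists i; rewrite // mem_filter bi mem_iota /=; lia.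
by rewrite (bend_pointE gpP iP qi qs); case: o {dir uniq_o}; rewrite !inE eqxx ?orbT.
Qed.

Lemma head_end_event P q : q \in gends (edge_at P 0) ->
  ~~ ((1 < size P) && (q \in gends (edge_at P 1))) ->
  (q, horizontal (edge_at P 0)) \in end_events P.
Proof.
move=> q0 nq; rewrite mem_cat; apply/orP; left; apply: map_f.
rewrite /head_ends; case: leqP => // sP.
by rewrite mem_filter q0 andbT; move: nq; rewrite sP.
Qed.

Lemma last_end_event P q : 1 < size P -> q \in gends (edge_at P (size P).-1) ->
  q \notin gends (edge_at P (size P).-2) ->
  (q, horizontal (edge_at P (size P).-1)) \in end_events P.
Proof.
move=> sP ql nq; rewrite mem_cat; apply/orP; right; apply: map_f.
by rewrite /last_ends leqNgt sP /= mem_filter nq.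
Qed.

Lemma boundary_candidate P q o : grid_path P -> boundary P q o ->
  (q, o) \in boundary_candidates P.
Proof.
move=> gpP bq; have [g [gP og qg]] := boundary_exists bq.
have uniq_o := boundary_unique bq.
have iP : index g P < size P by rewrite index_mem.
have gi : edge_at P (index g P) = g by rewrite nth_index.
move: (index g P) iP gi => i iP gi; rewrite -gi in qg.
rewrite mem_cat; apply/orP.
have [/andP [sP qs]|no_succ] := boolP ((i.+1 < size P) && (q \in gends (edge_at P i.+1))).
  by right; apply: bend_event_at gpP sP qg qs _ uniq_o; rewrite gi og eqxx.
have [/andP [i0 qp]|no_pred] := boolP ((0 < i) && (q \in gends (edge_at P i.-1))).
  by right; apply: (@bend_event_at P i.-1); rewrite ?prednK // gi og eqxx orbT.
left; rewrite -og -gi.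
have [i0|i_gt0] := posnP i.
  by rewrite i0 in qg no_succ *; apply: head_end_event.
have last_i : i = (size P).-1.
  suff: ~~ (i.+1 < size P) by lia.
  apply/negP => sP; have := grid_path_interior gpP i_gt0 sP qg.
  by move: no_succ no_pred; rewrite sP i_gt0 /= => /negbTE -> /negbTE ->.
rewrite last_i in qg *; apply: last_end_event => //; first by lia.
by move: no_pred; rewrite i_gt0 last_i.
Qed.

Lemma size_filter_notin_gends e f p : p \in gends e -> p \in gends f ->
  size [seq x <- gends e | x \notin gends f] <= 1.
Proof.
by case: e => [[x y] h]; rewrite !inE => /orP [] /eqP -> pf /=; rewrite pf /=; case: ifP.
Qed.

Lemma size_end_events P : grid_path P -> size (end_events P) <= 2.
Proof.
move=> gpP; rewrite size_cat !size_map /head_ends /last_ends.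
case: (leqP (size P) 1) => [_|sP]; first by case: (edge_at P 0) => [[]].
have [p p0 p1] := @grid_path_succ_shared P gpP 0 sP.
have [p' p'a p'b] := @grid_path_succ_shared P gpP (size P).-2 (ltac:(lia)).
rewrite (_ : (size P).-2.+1 = (size P).-1) in p'b; last by lia.
have := size_filter_notin_gends p0 p1; have := size_filter_notin_gends p'b p'a.
by move=> h1 h2; apply: (leq_add h2 h1).
Qed.

Lemma size_bend_events P :
  size (bend_events P) = 2 * nbends P /\
  size [seq c <- bend_events P | c.2] = nbends P.
Proof.
rewrite nbendsE /bend_events; elim: (bend_indices P) => [|i s [IH1 IH2]] //=.
by rewrite IH1 IH2; split; lia.
Qed.

Lemma size_boundary_candidates P : grid_path P ->
  size (boundary_candidates P) <= 2 + 2 * nbends P.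
Proof.
move=> gpP; have := size_end_events gpP; have [sb _] := size_bend_events P.
rewrite /boundary_candidates size_cat sb; lia.
Qed.

Lemma size_horizontal_candidates P : grid_path P ->
  size [seq c <- boundary_candidates P | c.2] <= 2 + nbends P.
Proof.
move=> gpP; have := size_end_events gpP; have [_ sb] := size_bend_events P.
rewrite /boundary_candidates filter_cat size_cat sb size_filter.
by have := count_size (fun c : gpoint * bool => c.2) (end_events P); lia.
Qed.

Lemma boundary_candidates_one_bend P : grid_path P -> nbends P = 1 ->
  exists A b, boundary_candidates P = A ++ [:: (b, true); (b, false)] /\ size A <= 2.
Proof.
move=> gpP; rewrite nbendsE /boundary_candidates /bend_events.
case: (bend_indices P) => [|i [|]] //= _.
by exists (end_events P), (bend_point P i); rewrite size_end_events.
Qed.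

Definition shift_edge (g : gedge) (t : int) : gedge :=
  let: (x, y, h) := g in if h then ((x + t)%R, y, true) else (x, (y + t)%R, false).

Definition shift_end (g : gedge) (t : int) : gpoint :=
  let: (x, y, h) := g in if h then ((x + t + 1)%R, y) else (x, (y + t + 1)%R).

Lemma shift_edge_inj g : injective (shift_edge g).
Proof. by case: g => [[x y] []] t t' /= [] /addrI. Qed.

Lemma shift_edge0 g : shift_edge g 0 = g.
Proof. by case: g => [[x y] []] /=; rewrite addr0. Qed.

Lemma edge_in_shift_end g t : edge_in (shift_end g t) (horizontal g) = shift_edge g t.
Proof. by case: g => [[x y] []]; rewrite /edge_in /= addrK. Qed.

Lemma edge_out_shift_end g t : edge_out (shift_end g t) (horizontal g) = shift_edge g (t + 1).
Proof. by case: g => [[x y] []]; rewrite /edge_out /= addrA. Qed.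

Lemma boundary_shift_end P g t : boundary P (shift_end g t) (horizontal g) =
  ((shift_edge g t \in P) != (shift_edge g (t + 1) \in P)).
Proof. by rewrite /boundary edge_in_shift_end edge_out_shift_end. Qed.

Lemma first_exit (Q : pred nat) : Q 0 -> (exists n, ~~ Q n) ->
  exists d, (forall t, t <= d -> Q t) /\ ~~ Q d.+1.
Proof.
move=> Q0 exQ; have [n nQn n_min] := ex_minnP exQ.
have n0 : n != 0 by apply: contraNneq nQn => ->.
exists n.-1; split; last by rewrite prednK ?lt0n.
move=> t tn; apply: contraT => /n_min; lia.
Qed.

Lemma inj_notin_seq (T : eqType) (f : nat -> T) (s : seq T) :
  injective f -> exists n, f n \notin s.
Proof.
move=> f_inj.
have [/allP fs|] := boolP (all (fun n => f n \in s) (iota 0 (size s).+1)); last first.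
  by rewrite -has_predC => /hasP [n _ fn]; exists n.
have sub : {subset [seq f n | n <- iota 0 (size s).+1] <= s}.
  by move=> _ /mapP [n n_in ->]; apply: fs.
have := uniq_leq_size (s1 := [seq f n | n <- iota 0 (size s).+1]) _ sub.
by rewrite map_inj_uniq // iota_uniq size_map size_iota ltnn => /(_ isT).
Qed.

Lemma maximal_run P g : g \in P -> exists d1 d2 : nat,
  [/\ forall t : int, (- d1%:Z <= t <= d2%:Z)%R -> shift_edge g t \in P,
      boundary P (shift_end g d2) (horizontal g) &
      boundary P (shift_end g (- d1%:Z - 1)) (horizontal g)].
Proof.
move=> gP.
have exit_run (sgn : int) : sgn != 0 ->
    exists d, (forall t, t <= d -> shift_edge g (sgn * t%:Z) \in P) /\
              shift_edge g (sgn * d.+1%:Z) \notin P.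
  move=> sgn0; apply: (first_exit (Q := fun t => shift_edge g (sgn * t%:Z) \in P)).
    by rewrite /= mulr0 shift_edge0.
  apply: inj_notin_seq => t t' /shift_edge_inj /(mulfI sgn0); lia.
have [d2 [run2 out2]] := exit_run 1%R isT.
have [d1 [run1 out1]] := exit_run (-1)%R isT.
exists d1, d2; split.
- case=> n nrange; first by have := run2 n; rewrite mul1r; apply; lia.
  by have := run1 n.+1; rewrite NegzE mulN1r; apply; lia.
- rewrite boundary_shift_end; have := run2 d2 (leqnn _); rewrite mul1r => ->.
  by move: out2; rewrite mul1r -PoszD addn1 => /negbTE ->.
- rewrite boundary_shift_end subrK; have := run1 d1 (leqnn _); rewrite mulN1r => ->.
  by move: out1; rewrite mulN1r (_ : (- d1%:Z - 1)%R = - d1.+1%:Z)%R; [move/negbTE -> | lia].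
Qed.

Lemma row_segment P x y : (x, y, true) \in P -> exists l r : int,
  [/\ (l <= x < r)%R, forall t, (l <= t < r)%R -> (t, y, true) \in P,
      boundary P (l, y) true & boundary P (r, y) true].
Proof.
move=> /maximal_run [d1 [d2 [run bd2 bd1]]].
exists (x - d1%:Z)%R, (x + d2%:Z + 1)%R; split.
- lia.
- by move=> t t_in; have := run (t - x)%R (ltac:(lia)); rewrite /= addrC subrK.
- by move: bd1; rewrite /= (_ : (x + (- d1%:Z - 1) + 1 = x - d1%:Z)%R) //; lia.
- by move: bd2.
Qed.

Lemma column_segment P x y : (x, y, false) \in P -> exists l r : int,
  [/\ (l <= y < r)%R, forall t, (l <= t < r)%R -> (x, t, false) \in P,
      boundary P (x, l) false & boundary P (x, r) false].
Proof.
move=> /maximal_run [d1 [d2 [run bd2 bd1]]].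
exists (y - d1%:Z)%R, (y + d2%:Z + 1)%R; split.
- lia.
- by move=> t t_in; have := run (t - y)%R (ltac:(lia)); rewrite /= addrC subrK.
- by move: bd1; rewrite /= (_ : (y + (- d1%:Z - 1) + 1 = y - d1%:Z)%R) //; lia.
- by move: bd2.
Qed.

Lemma nbends0_direction P : nbends P = 0 ->
  {in P &, forall g g', horizontal g = horizontal g'}.
Proof.
rewrite nbendsE => /size0nil no_bend.
have dir0 i : i < size P -> horizontal (edge_at P i) = horizontal (edge_at P 0).
  elim: i => [//|i IH] iP; rewrite -IH; last by lia.
  have : i \notin bend_indices P by rewrite no_bend.
  by rewrite mem_filter mem_iota /bend; case: eqP => //= _; lia.
by move=> g g' gP g'P; rewrite -(nth_index edge0 gP) -(nth_index edge0 g'P) !dir0 ?index_mem.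
Qed.

Lemma horizontal_boundary_bound P (E : seq gpoint) : grid_path P -> uniq E ->
  (forall q, q \in E -> boundary P q true) -> size E <= 2 + nbends P.
Proof.
move=> gpP uE bE; apply: leq_trans (size_horizontal_candidates gpP).
rewrite -(size_map (fun q => (q, true))); apply: uniq_leq_size.
  by rewrite map_inj_uniq // => q q' [].
by move=> _ /mapP [q qE ->]; rewrite mem_filter /= boundary_candidate ?bE.
Qed.

Lemma one_bend_boundary_point P (E : seq (gpoint * bool)) : grid_path P -> nbends P = 1 ->
  uniq E -> size E = 4 -> (forall c, c \in E -> boundary P c.1 c.2) ->
  exists b, (b, true) \in E /\ (b, false) \in E.
Proof.
move=> gpP nb1 uE sE bE.
have [A [b [candE sA]]] := boundary_candidates_one_bend gpP nb1.
have bo o : (b, o) \in E.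
  apply: contraT => bnE.
  suff: size E <= size (A ++ [:: (b, ~~ o)]) by rewrite size_cat sE /=; lia.
  apply: uniq_leq_size => // -[q o'] cE; have := boundary_candidate gpP (bE _ cE).
  rewrite candE !mem_cat !inE; case/or3P=> [->//|/eqP cb|/eqP cb]; rewrite cb in cE *;
    by case: o bnE {candE} => /=; rewrite ?eqxx ?orbT // cE.
by exists b; rewrite !bo.
Qed.

Definition column_run (P : seq gedge) (x y0 t : int) : Prop :=
  (forall t', (y0 <= t' <= t)%R -> (x, t', false) \in P) /\
  (forall t', (t <= t' < y0)%R -> (x, t', false) \in P).

Definition row_hook (P : seq gedge) (x0 y0 l r : int) : Prop :=
  [/\ (l <= x0 < r)%R,
      forall t, (l <= t < r)%R -> (t, y0, true) \in P,
      forall t y, (t, y, true) \in P -> y = y0 /\ (l <= t < r)%R &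
      forall x t, (x, t, false) \in P -> (x = l \/ x = r) /\ column_run P x y0 t].

(* A second horizontal run would add two more horizontal boundary events to the ends [l], [r]. *)
Lemma one_bend_row P y0 l r : grid_path P -> nbends P <= 1 -> (l < r)%R ->
  (forall t, (l <= t < r)%R -> (t, y0, true) \in P) ->
  boundary P (l, y0) true -> boundary P (r, y0) true ->
  forall t y, (t, y, true) \in P -> y = y0 /\ (l <= t < r)%R.
Proof.
move=> gpP nb lr row bl br t y tP.
have out_l : ((l - 1)%R, y0, true) \notin P.
  by move: bl; rewrite /boundary /= (row l) ?lexx ?lr //; case: (_ \in P).
have out_r : (r, y0, true) \notin P.
  by move: br; rewrite /boundary /= (row (r - 1)%R); [case: (_ \in P) | lia].
have [u1 [u2 [tu seg bu1 bu2]]] := row_segment tP.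
have [/andP [/eqP -> t_in] //|not_in] := boolP ((y == y0) && (l <= t < r)%R).
exfalso.
have outside t' : y = y0 -> (t', y0, true) \notin P -> ~~ (u1 <= t' < u2)%R.
  by move=> ey; apply: contra => /seg; rewrite ey.
have uE : uniq [:: (l, y0); (r, y0); (u1, y); (u2, y)].
  rewrite /= !inE !xpair_eqE !eqxx !andbT.
  have [ey|ny] := eqVneq y y0; last by clear -lr tu ny; lia.
  move: not_in; rewrite ey eqxx /= => not_in.
  have := outside _ ey out_l; have := outside _ ey out_r; clear -tu lr not_in; lia.
have bE q : q \in [:: (l, y0); (r, y0); (u1, y); (u2, y)] -> boundary P q true.
  by rewrite !inE => /or4P [] /eqP ->.
by have := horizontal_boundary_bound gpP uE bE; move: nb => /=; lia.
Qed.

(* The bend point is a boundary event in both directions, so it is an end of the row segment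
   and of every vertical segment. *)
Lemma one_bend_column P y0 l r : grid_path P -> nbends P <= 1 -> (l < r)%R ->
  (l, y0, true) \in P -> boundary P (l, y0) true -> boundary P (r, y0) true ->
  forall x t, (x, t, false) \in P -> (x = l \/ x = r) /\ column_run P x y0 t.
Proof.
move=> gpP nb lr l_in bl br x t tP.
have nb1 : nbends P = 1.
  have : nbends P != 0 by apply/eqP => /nbends0_direction/(_ _ _ l_in tP).
  by clear -nb; lia.
have [v1 [v2 [tv seg bv1 bv2]]] := column_segment tP.
have uE : uniq [:: ((l, y0), true); ((r, y0), true); ((x, v1), false); ((x, v2), false)].
  by rewrite /= !inE !xpair_eqE !andbF /=; clear -lr tv; lia.
have bE c : c \in [:: ((l, y0), true); ((r, y0), true); ((x, v1), false); ((x, v2), false)] ->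
    boundary P c.1 c.2.
  by rewrite !inE => /or4P [] /eqP ->.
have [[bx by'] []] := one_bend_boundary_point gpP nb1 uE erefl bE.
rewrite !inE !xpair_eqE !eqxx !andbT !andbF ?orbF /= => bT bF.
have [y0v ex] : (y0 = v1 \/ y0 = v2) /\ (x = l \/ x = r).
  case/orP: bT => /andP [/eqP bxE /eqP byE]; rewrite {}bxE {}byE in bF;
  by case/orP: bF => /andP [/eqP <- /eqP <-]; split; by [left | right].
by split=> //; split=> t' t'_in; apply: seg; clear -tv y0v t'_in; lia.
Qed.

Lemma one_bend_row_hook P x0 y0 : grid_path P -> nbends P <= 1 -> (x0, y0, true) \in P ->
  exists l r, row_hook P x0 y0 l r.
Proof.
move=> gpP nb x0P; have [l [r [x0lr row bl br]]] := row_segment x0P.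
have lr : (l < r)%R by clear -x0lr; lia.
exists l, r; split => //; first exact: one_bend_row.
by apply: one_bend_column => //; apply: row; rewrite lexx.
Qed.

Definition private_edge (P Q R : seq gedge) : Prop :=
  exists f, [/\ f \in P, f \in Q & f \notin R].

(* Where a private edge of [Pp] and [Pr] avoiding [Ps] can lie when the three paths are row
   hooks on the same row with left ends [lp], [lr], [ls]: on the row to the left of [ls], or on
   the common left column. *)
Definition left_private (Pp Pr Ps : seq gedge) (lp lr ls : int) : Prop :=
  (exists t, [/\ (lp <= t)%R, (lr <= t)%R & (t < ls)%R]) \/
  (lp = lr /\ exists t,
     [/\ (lp, t, false) \in Pp, (lp, t, false) \in Pr & (lp, t, false) \notin Ps]).

Definition right_private (Pp Pr Ps : seq gedge) (rp rr rs : int) : Prop :=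
  (exists t, [/\ (rs <= t)%R, (t < rp)%R & (t < rr)%R]) \/
  (rp = rr /\ exists t,
     [/\ (rp, t, false) \in Pp, (rp, t, false) \in Pr & (rp, t, false) \notin Ps]).

Lemma left_privateC Pp Pr Ps lp lr ls :
  left_private Pp Pr Ps lp lr ls -> left_private Pr Pp Ps lr lp ls.
Proof.
by case=> [[t [? ? ?]]|[E [t [? ? ?]]]]; [left | right; split=> //]; exists t; rewrite -?E.
Qed.

Lemma right_privateC Pp Pr Ps rp rr rs :
  right_private Pp Pr Ps rp rr rs -> right_private Pr Pp Ps rr rp rs.
Proof.
by case=> [[t [? ? ?]]|[E [t [? ? ?]]]]; [left | right; split=> //]; exists t; rewrite -?E.
Qed.

Lemma private_edge_side Pp Pr Ps x0 y0 lp rp lr rr ls rs :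
  row_hook Pp x0 y0 lp rp -> row_hook Pr x0 y0 lr rr -> row_hook Ps x0 y0 ls rs ->
  private_edge Pp Pr Ps ->
  left_private Pp Pr Ps lp lr ls \/ right_private Pp Pr Ps rp rr rs.
Proof.
case=> p0 _ p_row p_col [r0 _ r_row r_col] [_ s_seg _ _] [[[x y] [|]] [fp fr fs]].
  have [ey xp] := p_row _ _ fp; have [_ xr] := r_row _ _ fr; rewrite ey in fs.
  have xs : ~~ (ls <= x < rs)%R by apply: contra fs => /s_seg.
  by case: (ltP x ls) => xls; [left | right]; left; exists x; split; clear -xp xr xs xls; lia.
have [[xp|xp] _] := p_col _ _ fp; have [[xr|xr] _] := r_col _ _ fr.
- by left; right; split; [rewrite -xp -xr | exists y; rewrite -xp -?xr].
- by exfalso; clear -p0 r0 xp xr; lia.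
- by exfalso; clear -p0 r0 xp xr; lia.
- by right; right; split; [rewrite -xp -xr | exists y; rewrite -xp -?xr].
Qed.

Definition column_closed (P : seq gedge) (x y0 : int) : Prop :=
  forall t, (x, t, false) \in P -> column_run P x y0 t.

Lemma row_hook_column_closed P x0 y0 l r x :
  row_hook P x0 y0 l r -> column_closed P x y0.
Proof. by case=> _ _ _ col t /col []. Qed.

(* Two private vertical edges of [Pp] on one column through [(x, y0)]: on the same side of the
   row they are nested, on opposite sides [Pp] would have three edges at [(x, y0)]. *)
Lemma column_private_edges Pp Pr Ps x y0 h t1 t2 : grid_path Pp ->
  (h, y0, true) \in Pp -> (x, y0) \in gends (h, y0, true) ->
  column_closed Pp x y0 -> column_closed Pr x y0 -> column_closed Ps x y0 ->
  (x, t1, false) \in Pp -> (x, t1, false) \in Pr -> (x, t1, false) \notin Ps ->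
  (x, t2, false) \in Pp -> (x, t2, false) \in Ps -> (x, t2, false) \notin Pr -> False.
Proof.
move=> gpP hP xh Cp Cr Cs a1 a2 a3 b1 b2 b3.
have triple t t' : (y0 <= t)%R -> (t' < y0)%R -> column_run Pp x y0 t -> column_run Pp x y0 t' ->
    False.
  move=> tu t'd [up _] [_ down].
  apply: (grid_path_no_triple_point (q := (x, y0)) gpP hP (up y0 _) (down (y0 - 1)%R _) _ _ _ xh);
    rewrite /= ?inE ?xpair_eqE ?andbF ?eqxx ?andbT ?subrK ?orbT //; clear -tu t'd; lia.
have [Cr1 Cr2] := Cr _ a2; have [Cs1 Cs2] := Cs _ b2.
case: (lerP y0 t1) => y0t1; case: (lerP y0 t2) => y0t2.
- case: (lerP t1 t2) => t12; first by move: a3; rewrite Cs1 // y0t1.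
  by move: b3; rewrite Cr1 // y0t2 ltW.
- exact: triple y0t1 y0t2 (Cp _ a1) (Cp _ b1).
- exact: triple y0t2 y0t1 (Cp _ b1) (Cp _ a1).
- case: (lerP t1 t2) => t12; first by move: b3; rewrite Cr2 // t12.
  by move: a3; rewrite Cs2 // y0t1 ltW.
Qed.

Lemma left_private_excl Pp Pr Ps x0 y0 lp rp lr rr ls rs : grid_path Pp ->
  row_hook Pp x0 y0 lp rp -> row_hook Pr x0 y0 lr rr -> row_hook Ps x0 y0 ls rs ->
  left_private Pp Pr Ps lp lr ls -> left_private Pp Ps Pr lp ls lr -> False.
Proof.
move=> gpP hp hr hs.
case=> [[t [h1 h2 h3]]|[E [t [a1 a2 a3]]]] [[t' [h1' h2' h3']]|[E' [t' [b1 b2 b3]]]];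
  try by lia.
have [p0 p_seg _ _] := hp.
apply: (column_private_edges gpP (p_seg lp _) _ _ _ _ a1 a2 a3 b1 b2 b3).
- by rewrite lexx; clear -p0; lia.
- by rewrite /= inE eqxx.
- exact: row_hook_column_closed hp.
- exact: row_hook_column_closed hr.
- exact: row_hook_column_closed hs.
Qed.

Lemma right_private_excl Pp Pr Ps x0 y0 lp rp lr rr ls rs : grid_path Pp ->
  row_hook Pp x0 y0 lp rp -> row_hook Pr x0 y0 lr rr -> row_hook Ps x0 y0 ls rs ->
  right_private Pp Pr Ps rp rr rs -> right_private Pp Ps Pr rp rs rr -> False.
Proof.
move=> gpP hp hr hs.
case=> [[t [h1 h2 h3]]|[E [t [a1 a2 a3]]]] [[t' [h1' h2' h3']]|[E' [t' [b1 b2 b3]]]];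
  try by lia.
have [p0 p_seg _ _] := hp.
apply: (column_private_edges gpP (p_seg (rp - 1)%R _) _ _ _ _ a1 a2 a3 b1 b2 b3).
- by clear -p0; lia.
- by rewrite /= !inE subrK eqxx orbT.
- exact: row_hook_column_closed hp.
- exact: row_hook_column_closed hr.
- exact: row_hook_column_closed hs.
Qed.

Lemma one_bend_row_no_sun Pa Pb Pc x0 y0 :
  grid_path Pa -> grid_path Pb -> grid_path Pc ->
  nbends Pa <= 1 -> nbends Pb <= 1 -> nbends Pc <= 1 ->
  (x0, y0, true) \in Pa -> (x0, y0, true) \in Pb -> (x0, y0, true) \in Pc ->
  private_edge Pa Pb Pc -> private_edge Pb Pc Pa -> private_edge Pa Pc Pb -> False.
Proof.
move=> ga gb gc na nb nc ea eb ec ab bc ac.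
have [la [ra ha]] := one_bend_row_hook ga na ea.
have [lb [rb hb]] := one_bend_row_hook gb nb eb.
have [lc [rc hc]] := one_bend_row_hook gc nc ec.
case: (private_edge_side ha hb hc ab) => sab;
case: (private_edge_side hb hc ha bc) => sbc;
case: (private_edge_side ha hc hb ac) => sac.
- exact: left_private_excl ga ha hb hc sab sac.
- exact: left_private_excl gb hb ha hc (left_privateC sab) sbc.
- exact: left_private_excl ga ha hb hc sab sac.
- exact: right_private_excl gc hc hb ha (right_privateC sbc) (right_privateC sac).
- exact: left_private_excl gc hc hb ha (left_privateC sbc) (left_privateC sac).
- exact: right_private_excl ga ha hb hc sab sac.
- exact: right_private_excl gb hb ha hc (right_privateC sab) sbc.
- exact: right_private_excl ga ha hb hc sab sac.
Qed.

Definition swap_point (p : gpoint) : gpoint := (p.2, p.1).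
Definition swap_edge (e : gedge) : gedge := let: (x, y, h) := e in (y, x, ~~ h).

Lemma swap_point_inj : injective swap_point.
Proof. by case=> x y [x' y'] [-> ->]. Qed.

Lemma swap_edge_inj : injective swap_edge.
Proof. by case=> [[x y] h] [[x' y'] h'] [-> -> /negb_inj ->]. Qed.

Lemma gends_swap e : gends (swap_edge e) = map swap_point (gends e).
Proof. by case: e => [[x y] []]. Qed.

Lemma mem_swap e P : (swap_edge e \in map swap_edge P) = (e \in P).
Proof. exact: (mem_map swap_edge_inj). Qed.

Lemma grid_path_swap P : grid_path P -> grid_path (map swap_edge P).
Proof.
case=> P0 uP sh; split; rewrite ?size_map ?(map_inj_uniq swap_edge_inj) // => i j ij jP.
rewrite !(nth_map edge0) ?(ltn_trans ij) // -(sh i j ij jP) /nshared !gends_swap count_map.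
by apply: eq_count => p /=; rewrite (mem_map swap_point_inj).
Qed.

Lemma nbends_swap P : nbends (map swap_edge P) = nbends P.
Proof.
rewrite /nbends size_map; apply: eq_bigr => i _; have iP := ltn_ord i.
rewrite !(nth_map edge0) ?(leq_trans iP) ?leq_pred //; last by clear -iP; lia.
by case: (nth edge0 P i) => [[? ?] []]; case: (nth edge0 P i.+1) => [[? ?] []].
Qed.

Lemma private_edge_swap P Q R :
  private_edge P Q R -> private_edge (map swap_edge P) (map swap_edge Q) (map swap_edge R).
Proof. by case=> f [fP fQ fR]; exists (swap_edge f); rewrite !mem_swap. Qed.

Lemma one_bend_no_sun Pa Pb Pc e :
  grid_path Pa -> grid_path Pb -> grid_path Pc ->
  nbends Pa <= 1 -> nbends Pb <= 1 -> nbends Pc <= 1 ->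
  e \in Pa -> e \in Pb -> e \in Pc ->
  private_edge Pa Pb Pc -> private_edge Pb Pc Pa -> private_edge Pa Pc Pb -> False.
Proof.
case: e => [[x0 y0] []] ga gb gc na nb nc ea eb ec ab bc ac.
  exact: one_bend_row_no_sun ga gb gc na nb nc ea eb ec ab bc ac.
apply: (one_bend_row_no_sun (x0 := y0) (y0 := x0)
  (grid_path_swap ga) (grid_path_swap gb) (grid_path_swap gc)); rewrite ?nbends_swap //.
- by rewrite -(mem_swap _ Pa) in ea.
- by rewrite -(mem_swap _ Pb) in eb.
- by rewrite -(mem_swap _ Pc) in ec.
all: exact: private_edge_swap.
Qed.

Lemma Helly_triangle k (T : finType) (g : rel T) (P : T -> seq gedge) u v w :
  symmetric g -> Bk_EPG_rep k g P -> Helly_family P -> g u v -> g v w -> g u w ->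
  exists e, [/\ e \in P u, e \in P v & e \in P w].
Proof.
move=> gC [gpP _ rep] HP guv gvw guw.
have [x y xS yS|e eS] := HP [set u; v; w]; last first.
  by exists e; split; apply: eS; rewrite !inE eqxx ?orbT.
have [->|nxy] := eqVneq x y.
  by have [P0 _ _] := gpP y; exists (edge_at (P y) 0); split; exact: mem_nth.
apply/(rep x y nxy); move: xS yS nxy; rewrite !inE.
by do 2 case/orP=> [/orP []|] /eqP ->; rewrite ?eqxx // => _; rewrite // gC.
Qed.

Definition grid_pathb (P : seq gedge) : bool :=
  [&& 0 < size P, uniq P &
   all (fun i => all (fun j => (i < j) ==>
        (nshared (edge_at P i) (edge_at P j) == if j == i.+1 then 1 else 0))
      (iota 0 (size P))) (iota 0 (size P))].

Lemma grid_pathb_sound P : grid_pathb P -> grid_path P.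
Proof.
case/and3P => P0 uP /allP shP; split=> // i j ij jP.
have := shP i; rewrite mem_iota /= (ltn_trans ij jP) => /(_ isT) /allP /(_ j).
by rewrite mem_iota /= jP ij => /(_ isT) /eqP.
Qed.

Definition sun_path (i : nat) : seq gedge :=
  match i with
  | 0 => [:: (-2, 0, true); (-1, 0, true); (0, 0, false); (0, 1, false)]
  | 1 => [:: (0, 1, false); (0, 0, false); (0, 0, true); (1, 0, true)]
  | 2 => [:: (-2, 0, true); (-1, 0, true); (0, 0, true); (1, 0, true)]
  | 3 => [:: (0, 1, false)]
  | 4 => [:: (1, 0, true)]
  | _ => [:: (-2, 0, true)]
  end%R.

(* The 3-sun: the triangle 0, 1, 2 with the ears 3, 4, 5 on its sides 01, 12 and 02. *)
Definition sun_edges : seq (nat * nat) :=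
  [:: (0, 1); (0, 2); (1, 2); (0, 3); (1, 3); (1, 4); (2, 4); (0, 5); (2, 5)].

Definition sun (i j : 'I_6) : bool :=
  ((i : nat, j : nat) \in sun_edges) || ((j : nat, i : nat) \in sun_edges).

Lemma sun_simple : simple_graph sun.
Proof. by split=> [i j|]; [rewrite /sun orbC | case=> [[|[|[|[|[|[|]]]]]] ?]]. Qed.

Lemma sun_rep : Bk_EPG_rep 1 sun (fun i => sun_path i).
Proof.
have: [&& all (fun i => grid_pathb (sun_path i)) (iota 0 6),
           all (fun i => size (bend_indices (sun_path i)) <= 1) (iota 0 6) &
           all (fun u => all (fun v => (u != v) ==>
             ((((u, v) \in sun_edges) || ((v, u) \in sun_edges)) ==
              has (mem (sun_path v)) (sun_path u))) (iota 0 6)) (iota 0 6)].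
  by vm_compute.
case/and3P => /allP gp /allP nb /allP adj.
have in6 (i : 'I_6) : val i \in iota 0 6 by rewrite mem_iota ltn_ord.
split=> [i|i|u v uv]; first exact/grid_pathb_sound/gp/in6.
  by rewrite nbendsE; apply/nb/in6.
have /allP/(_ _ (in6 v)) := adj _ (in6 u); rewrite uv /= => /eqP adj_uv.
rewrite /sun adj_uv.
by split=> [/hasP [e eu ev]|[e [eu ev]]]; [exists e | apply/hasP; exists e].
Qed.

Lemma sun_not_Helly : ~ Helly_Bk_EPG 1 sun.
Proof.
case=> Q [rep HQ]; have [gpQ nbQ repQ] := rep.
have [symm _] := sun_simple.
have tri (u v w : 'I_6) := @Helly_triangle 1 _ sun Q u v w symm rep HQ.
have ear_private (u v w x : 'I_6) : sun u v -> sun u x -> sun v x -> w != x -> ~~ sun w x ->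
    private_edge (Q u) (Q v) (Q w).
  move=> uv ux vx wx not_wx; have [f [fu fv fx]] := tri u v x uv vx ux.
  exists f; split=> //; apply: contra not_wx => fw.
  by apply/(repQ w x wx); exists f.
pose a := @Ordinal 6 0 isT; pose b := @Ordinal 6 1 isT; pose c := @Ordinal 6 2 isT.
have [e [ea eb ec]] := tri a b c isT isT isT.
apply: (one_bend_no_sun (gpQ a) (gpQ b) (gpQ c) (nbQ a) (nbQ b) (nbQ c) ea eb ec).
- exact: (ear_private a b c (@Ordinal 6 3 isT)).
- exact: (ear_private b c a (@Ordinal 6 4 isT)).
- exact: (ear_private a c b (@Ordinal 6 5 isT)).
Qed.

Definition trace (I : finType) (Q : I -> seq gedge) (e : gedge) : {set I} :=
  [set i | e \in Q i].

(* Walking from [f] along its grid line, the trace must eventually change since every path is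
   finite; where it first does, some path has a boundary event. *)
Lemma trace_boundary (I : finType) (Q : I -> seq gedge) f : trace Q f != set0 ->
  exists i q, boundary (Q i) q (horizontal f) /\
              trace Q (edge_in q (horizontal f)) = trace Q f.
Proof.
case/set0Pn => i0; rewrite inE => fi0.
pose same_trace t := trace Q (shift_edge f t%:Z) == trace Q f.
have exit : exists n, ~~ same_trace n.
  have inj : injective (fun t : nat => shift_edge f t%:Z) by move=> t t' /shift_edge_inj [].
  have [n fn] := inj_notin_seq (Q i0) inj.
  exists n; apply: contra fn => /eqP E.
  have : i0 \in trace Q f by rewrite inE.
  by rewrite -E inE.
have start : same_trace 0 by rewrite /same_trace shift_edge0.
have [d [same change]] := first_exit start exit.
have /eqP trace_d := same d (leqnn d).
have [i bi] : exists i, (shift_edge f d%:Z \in Q i) != (shift_edge f d.+1%:Z \in Q i).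
  apply/existsP; apply: contraNT change; rewrite negb_exists => /forallP same_i.
  by rewrite /same_trace -trace_d; apply/eqP/setP => i; rewrite !inE; apply/esym/eqP/negPn/same_i.
exists i, (shift_end f d); rewrite edge_in_shift_end trace_d boundary_shift_end.
by rewrite -PoszD addn1.
Qed.

Lemma card_nonempty_traces k (I D : finType) (Q : I -> seq gedge) (S : D -> {set I}) :
  (forall i, grid_path (Q i)) -> (forall i, nbends (Q i) <= k) ->
  injective S -> (forall d, exists f, trace Q f = S d) -> (forall d, S d != set0) ->
  #|D| <= #|I| * (2 + 2 * k).
Proof.
move=> gpQ nbQ S_inj S_trace S_nonempty.
pose events := flatten [seq boundary_candidates (Q i) | i <- enum I].
have size_events : size events <= #|I| * (2 + 2 * k).
  rewrite size_flatten sumnE !big_map -enumT big_enum /= -sum_nat_const.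
  apply: leq_sum => i _; apply: leq_trans (size_boundary_candidates (gpQ i)) _.
  by rewrite leq_add2l leq_mul2l nbQ orbT.
apply: leq_trans size_events; rewrite cardE -(size_map S).
rewrite -(size_map (fun c => trace Q (edge_in c.1 c.2))).
apply: uniq_leq_size; first by rewrite map_inj_uniq ?enum_uniq.
move=> _ /mapP [d _ ->]; have [f trace_f] := S_trace d.
have [|i [q [bq Eq]]] := @trace_boundary I Q f; first by rewrite trace_f.
apply/mapP; exists (q, horizontal f); last by rewrite /= Eq trace_f.
apply/flattenP; exists (boundary_candidates (Q i)); first by apply: map_f; rewrite mem_enum.
exact: boundary_candidate.
Qed.

Ltac solve_nshared :=
  rewrite /nshared /= !inE !xpair_eqE ?andbT ?andbF ?orbF;
  repeat (case: eqP => ?); simpl; lia.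

Lemma nshared_self e : nshared e e = 2.
Proof. by case: e => [[x y] []]; rewrite /nshared /= !inE !eqxx /= ?orbT. Qed.

Lemma grid_path_single e : grid_path [:: e].
Proof. by split=> // i j ij /=; lia. Qed.

Lemma grid_path_cat s1 s2 : grid_path s1 -> grid_path s2 ->
  {in s1 & s2, forall e f, nshared e f = ((e == last edge0 s1) && (f == head edge0 s2) : nat)} ->
  grid_path (s1 ++ s2).
Proof.
case=> s1_0 u1 sh1 [s2_0 u2 sh2] sh12.
split; first by rewrite size_cat addn_gt0 s1_0.
  rewrite cat_uniq u1 u2 andbT; apply/hasPn => f fs2; apply/negP => fs1.
  by have := sh12 f f fs1 fs2; rewrite nshared_self; case: (_ && _).
move=> i j ij; rewrite size_cat !nth_cat => js.
case: (ltnP j (size s1)) => j1; first by rewrite (ltn_trans ij j1); apply: sh1.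
case: (ltnP i (size s1)) => i1; last first.
  have ij' : i - size s1 < j - size s1 by lia.
  have js' : j - size s1 < size s2 by lia.
  rewrite (sh2 _ _ ij' js').
  by case: eqP => ?; case: eqP => ?; simpl; lia.
have js2 : j - size s1 < size s2 by lia.
have ps1 : (size s1).-1 < size s1 by rewrite prednK.
rewrite sh12 ?mem_nth // -nth_last -(seq.nth0 edge0 s2).
rewrite (nth_uniq edge0 i1 ps1 u1) (nth_uniq edge0 js2 s2_0 u2).
by do 3 case: eqP => ?; simpl; lia.
Qed.

Definition hrun (x y : int) (n : nat) : seq gedge :=
  [seq ((x + t%:Z)%R, y, true) | t <- iota 0 n].
Definition vrun (x y : int) (n : nat) : seq gedge :=
  [seq (x, (y + t%:Z)%R, false) | t <- iota 0 n].

Lemma mem_hrun x y n e :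
  reflect (exists2 t, t < n & e = ((x + t%:Z)%R, y, true)) (e \in hrun x y n).
Proof. by apply: (iffP mapP) => [[t]|[t tn ->]]; [rewrite mem_iota => /andP [_ tn] ->|];
  exists t; rewrite ?mem_iota. Qed.

Lemma mem_vrun x y n e :
  reflect (exists2 t, t < n & e = (x, (y + t%:Z)%R, false)) (e \in vrun x y n).
Proof. by apply: (iffP mapP) => [[t]|[t tn ->]]; [rewrite mem_iota => /andP [_ tn] ->|];
  exists t; rewrite ?mem_iota. Qed.

Lemma grid_path_hrun x y n : 0 < n -> grid_path (hrun x y n).
Proof.
move=> n0; split; rewrite /hrun ?size_map ?size_iota //.
  by rewrite map_inj_uniq ?iota_uniq // => t t' [] /eqP; lia.
move=> i j ij jn; rewrite !(nth_map 0) ?size_iota ?nth_iota; try lia.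
solve_nshared.
Qed.

Lemma grid_path_vrun x y n : 0 < n -> grid_path (vrun x y n).
Proof.
move=> n0; split; rewrite /vrun ?size_map ?size_iota //.
  by rewrite map_inj_uniq ?iota_uniq // => t t' [] /eqP; lia.
move=> i j ij jn; rewrite !(nth_map 0) ?size_iota ?nth_iota; try lia.
solve_nshared.
Qed.

Lemma last_hrun x y n : last edge0 (hrun x y n.+1) = ((x + n%:Z)%R, y, true).
Proof. by rewrite -nth_last /hrun size_map size_iota (nth_map 0) ?size_iota ?nth_iota. Qed.

Fixpoint changes (s : seq bool) : nat :=
  if s is b :: ((b' :: _) as s') then (b != b') + changes s' else 0.

Lemma nbends_changes P : nbends P = changes (map horizontal P).
Proof.
elim: P => [|e [|f P] IH]; rewrite /nbends ?big_ord0 //.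
rewrite big_ord_recl -[RHS]/((horizontal e != horizontal f) + changes (map horizontal (f :: P))).
by rewrite -IH; congr (_ + _); apply: eq_bigr.
Qed.

Lemma changes_cat s1 s2 : changes (s1 ++ s2) <= changes s1 + changes s2 + 1.
Proof.
elim: s1 => [|b s1 IH] /=; first lia.
case: s1 IH => [|b' s1] IH /=; last by move: IH => /=; lia.
by case: s2 {IH} => [|? ?] /=; lia.
Qed.

Lemma changes_nseq n b : changes (nseq n b) = 0.
Proof. by elim: n => [|[|n] IH] //=; rewrite eqxx. Qed.

Lemma horizontal_hrun x y n : map horizontal (hrun x y n) = nseq n true.
Proof.
apply: (@eq_from_nth _ false); rewrite ?size_map ?size_iota ?size_nseq // => i iP.
by rewrite (nth_map edge0) ?size_map ?size_iota // (nth_map 0) ?size_iota // nth_nseq iP.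
Qed.

Lemma horizontal_vrun x y n : map horizontal (vrun x y n) = nseq n false.
Proof.
apply: (@eq_from_nth _ false); rewrite ?size_map ?size_iota ?size_nseq // => i iP.
by rewrite (nth_map edge0) ?size_map ?size_iota // (nth_map 0) ?size_iota // nth_nseq iP.
Qed.

Section EaredClique.
Variable a : nat.

Definition ear_height (i j : nat) : nat := 1 + 2 * (i * a + j).
Definition clique_height : nat := 2 * a * a + 2.

(* Clique path [l] runs along row 0 and turns up column [l + 1]; ear path [(i, j)] is a
   staple whose two legs are single vertical edges on columns [i + 1] and [a + j + 1] at its
   own height, so it meets exactly the clique paths [i] and [a + j]. *)
Definition clique_path (l : nat) : seq gedge :=
  hrun 0 0 l.+1 ++ vrun (Posz l.+1) 0 clique_height.

Definition ear_path (i j : nat) : seq gedge :=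
  [:: ((Posz i.+1), (Posz (ear_height i j)), false)] ++
  (hrun (Posz i.+1) (Posz (ear_height i j).+1) (a + j - i) ++
   [:: ((Posz (a + j).+1), (Posz (ear_height i j)), false)]).

Lemma grid_path_clique_path l : grid_path (clique_path l).
Proof.
apply: grid_path_cat; [exact: grid_path_hrun | apply: grid_path_vrun; rewrite /clique_height; lia|].
rewrite last_hrun /clique_height addn2 /=.
move=> e f /mem_hrun [t tl ->] /mem_vrun [t' tL ->]; solve_nshared.
Qed.

Lemma grid_path_ear_path i j : i < a -> grid_path (ear_path i j).
Proof.
move=> ia; have len : a + j - i = (a + j - i).-1.+1 by lia.
apply: grid_path_cat; [exact: grid_path_single | |].
  apply: grid_path_cat; [apply: grid_path_hrun; lia | exact: grid_path_single |].
  rewrite len last_hrun -len => e f /mem_hrun [t tl ->]; rewrite inE => /eqP ->.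
  rewrite /= eqxx andbT; solve_nshared.
set run := hrun _ _ _.
have -> : head edge0 (run ++ [:: _]) = (Posz i.+1, Posz (ear_height i j).+1, true).
  by rewrite /run len /= addr0.
move=> e f; rewrite !inE => /eqP ->.
rewrite mem_cat => /orP [/mem_hrun [t tl ->]|]; last rewrite inE => /eqP ->; solve_nshared.
Qed.

Lemma nbends_clique_path l : nbends (clique_path l) <= 1.
Proof.
rewrite nbends_changes map_cat horizontal_hrun horizontal_vrun.
by have := changes_cat (nseq l.+1 true) (nseq clique_height false); rewrite !changes_nseq.
Qed.

Lemma nbends_ear_path i j : nbends (ear_path i j) <= 2.
Proof.
rewrite nbends_changes !map_cat horizontal_hrun.
have := changes_cat [:: false] (nseq (a + j - i) true ++ [:: false]).
by have := changes_cat (nseq (a + j - i) true) [:: false]; rewrite changes_nseq /=; lia.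
Qed.

Lemma mem_clique_path l e : e \in clique_path l ->
  (exists2 t, t < l.+1 & e = (Posz t, 0%R, true)) \/
  (exists2 t, t < clique_height & e = (Posz l.+1, Posz t, false)).
Proof.
by rewrite mem_cat => /orP [/mem_hrun|/mem_vrun] [t tl ->]; [left | right]; exists t;
  rewrite // add0r.
Qed.

Lemma mem_ear_path i j e : e \in ear_path i j ->
  [\/ e = (Posz i.+1, Posz (ear_height i j), false),
      exists t, e = ((Posz i.+1 + Posz t)%R, Posz (ear_height i j).+1, true) |
      e = (Posz (a + j).+1, Posz (ear_height i j), false)].
Proof.
rewrite /ear_path !mem_cat !inE => /or3P [/eqP ->|/mem_hrun [t _ ->]|/eqP ->].
- exact: Or31.
- by apply: Or32; exists t.
- exact: Or33.
Qed.

Lemma ear_height_lt i j : i < a -> j < a -> ear_height i j < clique_height.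
Proof. by rewrite /ear_height /clique_height => ia ja; nia. Qed.

Lemma ear_height_inj i j i' j' : j < a -> j' < a ->
  ear_height i j = ear_height i' j' -> i = i' /\ j = j'.
Proof.
rewrite /ear_height => ja ja' E.
have {E} E : i * a + j = i' * a + j' by lia.
have := congr1 (modn^~ a) E; have := congr1 (divn^~ a) E.
by rewrite /= !modnMDl !modn_small // !divnMDl ?divn_small ?addn0 //; lia.
Qed.

Definition eared_vertex := ('I_(a + a) + 'I_a * 'I_a)%type.

Definition eared (u v : eared_vertex) : bool :=
  match u, v with
  | inl l, inl l' => l != l'
  | inl l, inr (i, j) | inr (i, j), inl l => (val l == val i) || (val l == a + val j)
  | inr _, inr _ => false
  end.

Definition eared_path (v : eared_vertex) : seq gedge :=
  match v with
  | inl l => clique_path l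
  | inr (i, j) => ear_path i j
  end.

Lemma eared_simple : simple_graph eared.
Proof.
split; first by case=> [l|[i j]] [l'|[i' j']] //=; rewrite eq_sym.
by case=> [l|[i j]] /=; rewrite ?eqxx.
Qed.

Lemma clique_ear_intersect (l : 'I_(a + a)) (i j : 'I_a) :
  eared (inl l) (inr (i, j)) <-> edge_intersect (clique_path l) (ear_path i j).
Proof.
have hgt := ear_height_lt (ltn_ord i) (ltn_ord j).
split=> [/orP [] /eqP E|[e [/mem_clique_path el /mem_ear_path ee]]].
- exists (Posz i.+1, Posz (ear_height i j), false); split; first last.
    by rewrite /ear_path mem_cat inE eqxx.
  by rewrite mem_cat; apply/orP; right; apply/mem_vrun; exists (ear_height i j); rewrite ?E ?add0r.
- exists (Posz (a + j).+1, Posz (ear_height i j), false); split; first last.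
    by rewrite /ear_path !mem_cat !inE eqxx !orbT.
  by rewrite mem_cat; apply/orP; right; apply/mem_vrun; exists (ear_height i j); rewrite ?E ?add0r.
- by rewrite /=; case: el => [] [t _ Ee]; rewrite Ee in ee; case: ee => [|[t']|] [] => *; lia.
Qed.

Lemma ear_ear_disjoint (i j i' j' : 'I_a) : (i, j) != (i', j') ->
  ~ edge_intersect (ear_path i j) (ear_path i' j').
Proof.
move=> neq [e [/mem_ear_path ee /mem_ear_path ee']]; move: neq.
have ja := ltn_ord j; have ja' := ltn_ord j'.
suff /(ear_height_inj ja ja') [/val_inj -> /val_inj ->] : ear_height i j = ear_height i' j'.
  by rewrite eqxx.
by case: ee => [|[t]|] Ee; rewrite Ee in ee'; case: ee' => [|[t']|] [] => *;
  rewrite /ear_height; lia.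
Qed.

Lemma eared_rep : Bk_EPG_rep 2 eared eared_path.
Proof.
split.
- by case=> [l|[i j]]; [exact: grid_path_clique_path | exact/grid_path_ear_path/ltn_ord].
- by case=> [l|[i j]]; [exact: leq_trans (nbends_clique_path l) _ | exact: nbends_ear_path].
case=> [l|[i j]] [l'|[i' j']] neq /=.
- split=> // _; exists (0%R, 0%R, true).
  by rewrite !mem_cat; split; apply/orP; left; apply/mem_hrun; exists 0.
- exact: clique_ear_intersect.
- by rewrite clique_ear_intersect; split; case=> e []; exists e.
- by split=> // /(ear_ear_disjoint neq).
Qed.
End EaredClique.

Lemma eared_not_Helly k : ~ Helly_Bk_EPG k (@eared (4 * k + 5)).
Proof.
set a := 4 * k + 5; case=> Q [rep HQ]; have [gpQ nbQ repQ] := rep.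
have [symm _] := eared_simple a.
pose S (d : 'I_a * 'I_a) : {set 'I_(a + a)} := [set lshift a d.1; rshift a d.2].
suff : #|{: 'I_a * 'I_a}| <= #|'I_(a + a)| * (2 + 2 * k).
  by rewrite card_prod !card_ord /a; nia.
apply: (@card_nonempty_traces k _ _ (fun l => Q (inl l)) S) => // [[i j] [i' j']|[i j]|d].
- move/setP => E; have := E (lshift a i); have := E (rshift a j).
  rewrite !inE !eqxx /= -!(inj_eq val_inj) /= => Ej Ei.
  have := ltn_ord i; have := ltn_ord j; have := ltn_ord i'; have := ltn_ord j'.
  by move=> *; congr (_, _); apply: ord_inj; move: Ei Ej; lia.
- have ia := ltn_ord i.
  have ij : @eared a (inl (lshift a i)) (inl (rshift a j)).
    by rewrite /= -(inj_eq val_inj) /=; lia.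
  have i_ear : @eared a (inl (lshift a i)) (inr (i, j)) by rewrite /= eqxx.
  have j_ear : @eared a (inl (rshift a j)) (inr (i, j)) by rewrite /= eqxx orbT.
  have [f [fi fj fij]] := Helly_triangle symm rep HQ ij j_ear i_ear.
  exists f; apply/setP => l; rewrite !inE; apply/idP/idP => [fl|/orP [] /eqP -> //].
  have /(repQ (inl l) (inr (i, j)) isT) /= : edge_intersect (Q (inl l)) (Q (inr (i, j))).
    by exists f.
  by rewrite -!(inj_eq val_inj) /=.
- by apply/set0Pn; exists (lshift a d.1); rewrite !inE eqxx.
Qed.

Unset Implicit Arguments.
Set Strict Implicit.

Theorem lemma5p1 (k : nat) (hk : 0 < k) :
  (forall (T : finType) (g : rel T),
      simple_graph g -> Helly_Bk_EPG k g -> Bk_EPG k g) /\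
  (exists (T : finType) (g : rel T),
      simple_graph g /\ Bk_EPG k g /\ ~ Helly_Bk_EPG k g).
Proof.
split=> [T g _ [P [rep _]]|]; first by exists P.
have [-> | k_ge2] : k = 1 \/ 1 < k by lia.
  exists 'I_6, sun; split; first exact: sun_simple.
  by split; [exists (fun i : 'I_6 => sun_path i); exact: sun_rep | exact: sun_not_Helly].
exists (eared_vertex (4 * k + 5)), (@eared (4 * k + 5)).
split; first exact: eared_simple.
split; last exact: eared_not_Helly.
exists (@eared_path (4 * k + 5)); have [gp nb adj] := eared_rep (4 * k + 5).
by split=> // v; apply: leq_trans (nb v) k_ge2.
Qed.
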